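(* Let $R$ be a Noetherian prime duo-ring (equivalently, a Noetherian duo-domain). Then the following are equivalent: (1) $R$ is an FGC-ring; (2) $R$ is a left FGC-ring; (3) $R$ is a principal ideal ring. Moreover, these are also equivalent to: $R$ is a right FGC-ring.
   Context: All rings have identity and modules are unital. ''Noetherian'' means both left and right Noetherian. A duo-ring is a ring in which every one-sided ideal is two-sided. A left (resp. right) FGC-ring is a ring over which every finitely generated left (resp. right) module is a direct sum of cyclic submodules; an FGC-ring is both left and right FGC. A principal ideal ring is a ring in which every left ideal and every right ideal is principal. *)

From HB Require Import structures.
From mathcomp Require Import all_boot all_order all_algebra.
Set Implicit Arguments. Unset Strict Implicit. Unset Printing Implicit Defensive.
Import GRing.Theory.
Local Open Scope ring_scope.

Section RingDefs.
Variable R : nzRingType.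

Definition left_ideal (I : pred R) : Prop :=
  [/\ 0 \in I, (forall x y, x \in I -> y \in I -> x + y \in I)
    & (forall r x, x \in I -> r * x \in I)].
Definition right_ideal (I : pred R) : Prop :=
  [/\ 0 \in I, (forall x y, x \in I -> y \in I -> x + y \in I)
    & (forall r x, x \in I -> x * r \in I)].

Definition duo_ring : Prop :=
  (forall I, left_ideal I -> right_ideal I) /\
  (forall I, right_ideal I -> left_ideal I).

(* prime ring: aRb = 0 implies a = 0 or b = 0 (R nonzero by nzRingType) *)
Definition prime_ring : Prop :=
  forall a b : R, (forall r : R, a * r * b = 0) -> a = 0 \/ b = 0.

Definition left_noetherian : Prop :=
  forall I : nat -> pred R, (forall n, left_ideal (I n)) ->
    (forall n, {subset I n <= I n.+1}) ->
    exists N, forall n, (N <= n)%N -> I n =i I N.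
Definition right_noetherian : Prop :=
  forall I : nat -> pred R, (forall n, right_ideal (I n)) ->
    (forall n, {subset I n <= I n.+1}) ->
    exists N, forall n, (N <= n)%N -> I n =i I N.
Definition noetherian : Prop := left_noetherian /\ right_noetherian.

Definition principal_ideal_ring : Prop :=
  (forall I, left_ideal I -> exists a : R, forall x, x \in I <-> exists r, x = r * a) /\
  (forall I, right_ideal I -> exists a : R, forall x, x \in I <-> exists r, x = a * r).

Definition fin_generated (M : lmodType R) : Prop :=
  exists s : seq M, forall m : M,
    exists c : 'I_(size s) -> R, m = \sum_(i < size s) c i *: s`_i.

(* M is the (internal) direct sum of the cyclic submodules R x_1, ..., R x_n *)
Definition direct_sum_of_cyclics (M : lmodType R) : Prop :=
  exists s : seq M,
    (forall m : M, exists c : 'I_(size s) -> R, m = \sum_(i < size s) c i *: s`_i) /\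
    (forall c : 'I_(size s) -> R, \sum_(i < size s) c i *: s`_i = 0 ->
       forall i, c i *: s`_i = 0).

Definition left_FGC : Prop :=
  forall M : lmodType R, fin_generated M -> direct_sum_of_cyclics M.
End RingDefs.

(* right R-modules = left modules over the converse ring R^c *)
Definition right_FGC (R : nzRingType) : Prop := left_FGC R^c.
Definition FGC (R : nzRingType) : Prop := left_FGC R /\ right_FGC R.

(* A prime duo ring is a domain in which Ra = aR for every a, and its opposite ring R^c is
   again one; so it suffices to show that a left Noetherian duo domain is left FGC exactly
   when it is a left principal ideal ring, and to transport this along R^c.

   If R is a left principal ideal ring and y :: u generates M, choose among the generating
   systems of that length one maximising the left ideal Rg of the r with r y in
   R u_1 + ... + R u_n, and write g y = sum_i d_i u_i.  A Bezout-type change of the pair (y, u_i) shows, by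
   maximality, that every d_i lies in gR; then y' = y - sum_i f_i u_i with d_i = g f_i is
   killed by g, so R y' meets the span of u trivially and splits off, and u is decomposed by
   induction.  Conversely, if R is left FGC, the left ideal Ra + Rb is a direct sum of cyclic
   modules; any two of its nonzero elements have a common nonzero left multiple, so only one
   summand is nonzero and Ra + Rb is principal; ACC then makes every left ideal principal. *)

From HB Require Import structures.
From mathcomp Require Import boolp.
From mathcomp Require Import all_boot all_order all_algebra.
Set Implicit Arguments. Unset Strict Implicit. Unset Printing Implicit Defensive.
Import GRing.Theory.
Local Open Scope ring_scope.

Lemma left_noetherian_maximal (R : nzRingType) (A : Type) (I : A -> pred R)
    (P : A -> Prop) (a0 : A) :
  left_noetherian R -> (forall a, P a -> left_ideal (I a)) -> P a0 ->
  exists2 a, P a & forall b, P b -> {subset I a <= I b} -> {subset I b <= I a}.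
Proof.
move=> noeth idealI Pa0; apply: contrapT => nomax.
pose grows a b := P a ->
  [/\ P b, {subset I a <= I b} & ~ {subset I b <= I a}].
have [next nextP] : {next : A -> A & forall a, grows a (next a)}.
  apply: choice => a.
  have [Pa|nPa] := pselect (P a); last by exists a.
  apply: contrapT => nonext; apply: nomax; exists a => // b Pb sIab.
  by apply: contrapT => sIba; apply: nonext; exists b.
pose chain k := iter k next a0.
have Pchain k : P (chain k) by elim: k => //= k /nextP[].
have [N stable] := noeth (I \o chain) (fun k => idealI _ (Pchain k))
  (fun k => let: And3 _ sI _ := nextP _ (Pchain k) in sI).
have [_ _] := nextP _ (Pchain N); apply=> x.
by rewrite /= -(stable N.+1).
Qed.

Section Span.
Variables (R : nzRingType) (M : lmodType R).

Definition lincomb (c : nat -> R) (u : seq M) : M := \sum_(i < size u) c i *: u`_i.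
Definition in_span (u : seq M) (m : M) : Prop := exists c, m = lincomb c u.
Definition span_eq (s t : seq M) : Prop := forall m, in_span s m <-> in_span t m.
Definition independent (t : seq M) : Prop :=
  forall c, lincomb c t = 0 -> forall i, (i < size t)%N -> c i *: t`_i = 0.

Lemma lincomb_nil c : lincomb c [::] = 0.
Proof. exact: big_ord0. Qed.

Lemma lincomb_cons c x u : lincomb c (x :: u) = c 0%N *: x + lincomb (c \o succn) u.
Proof. by rewrite /lincomb /= big_ord_recl. Qed.

Lemma eq_lincomb c d u :
  (forall i, (i < size u)%N -> c i = d i) -> lincomb c u = lincomb d u.
Proof. by move=> cd; apply: eq_bigr => i _; rewrite cd. Qed.

Lemma scaler_lincomb a c u : a *: lincomb c u = lincomb (fun i => a * c i) u.
Proof. by rewrite /lincomb scaler_sumr; apply: eq_bigr => i _; rewrite scalerA. Qed.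

Lemma lincombD c d u : lincomb c u + lincomb d u = lincomb (fun i => c i + d i) u.
Proof. by rewrite /lincomb -big_split; apply: eq_bigr => i _; rewrite scalerDl. Qed.

Lemma lincomb0 u : lincomb (fun=> 0) u = 0.
Proof. by rewrite /lincomb big1 // => i _; rewrite scale0r. Qed.

Lemma lincomb_delta u k a : (k < size u)%N ->
  lincomb (fun j => if j == k then a else 0) u = a *: u`_k.
Proof.
elim: u k => [|x u IHu] [|k] //= ltku; rewrite lincomb_cons /=.
  by rewrite lincomb0 addr0.
by rewrite scale0r add0r IHu.
Qed.

Lemma lincomb_set_nth c u i x : (i < size u)%N ->
  lincomb c (set_nth 0 u i x) = lincomb c u - c i *: u`_i + c i *: x.
Proof.
elim: u i c => [|y u IHu] [|i] c //= ltiu; rewrite !lincomb_cons.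
  by rewrite (addrC (c 0%N *: y)) addrK addrC.
by rewrite IHu // !addrA.
Qed.

Lemma in_span0 u : in_span u 0.
Proof. by exists (fun=> 0); rewrite lincomb0. Qed.

Lemma in_spanD u m1 m2 : in_span u m1 -> in_span u m2 -> in_span u (m1 + m2).
Proof. by move=> [c ->] [d ->]; exists (fun i => c i + d i); rewrite lincombD. Qed.

Lemma in_spanZ u a m : in_span u m -> in_span u (a *: m).
Proof. by move=> [c ->]; exists (fun i => a * c i); rewrite scaler_lincomb. Qed.

Lemma in_spanN u m : in_span u m -> in_span u (- m).
Proof. by rewrite -scaleN1r; apply: in_spanZ. Qed.

Lemma in_spanB u m1 m2 : in_span u m1 -> in_span u m2 -> in_span u (m1 - m2).
Proof. by move=> span1 /in_spanN; apply: in_spanD. Qed.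

Lemma in_span_nth u k : (k < size u)%N -> in_span u u`_k.
Proof.
by move=> ltku; exists (fun j => if j == k then 1 else 0); rewrite lincomb_delta ?scale1r.
Qed.

Lemma in_span_head x u : in_span (x :: u) x.
Proof. exact: (in_span_nth (k := 0)). Qed.

Lemma in_span_consP x u m :
  in_span (x :: u) m <-> exists a m', in_span u m' /\ m = a *: x + m'.
Proof.
split=> [[c ->]|[a [m' [[c ->] ->]]]].
  rewrite lincomb_cons; exists (c 0%N), (lincomb (c \o succn) u).
  by split=> //; exists (c \o succn).
by exists (fun j => if j is j'.+1 then c j' else a); rewrite lincomb_cons.
Qed.

Lemma in_span_cons x u m : in_span u m -> in_span (x :: u) m.
Proof. by move=> spanm; apply/in_span_consP; exists 0, m; rewrite scale0r add0r. Qed.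

Lemma in_span2 x y a b : in_span [:: x; y] (a *: x + b *: y).
Proof.
apply/in_span_consP; exists a, (b *: y); split=> //.
by apply/in_spanZ/in_span_head.
Qed.

Lemma in_span_trans s t m :
  (forall i, (i < size t)%N -> in_span s t`_i) -> in_span t m -> in_span s m.
Proof.
elim: t m => [|x t IHt] m span_t.
  by move=> [c ->]; rewrite lincomb_nil; apply: in_span0.
move=> /in_span_consP[a [m' [spanm' ->]]]; apply: in_spanD.
  by apply/in_spanZ/(span_t 0%N).
by apply: IHt spanm' => i; apply: (span_t i.+1).
Qed.

Lemma span_eq_gen s t :
  (forall i, (i < size t)%N -> in_span s t`_i) ->
  (forall i, (i < size s)%N -> in_span t s`_i) -> span_eq s t.
Proof. by move=> st ts m; split; apply: in_span_trans. Qed.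

Lemma span_eq_cons x s t : span_eq s t -> span_eq (x :: s) (x :: t).
Proof.
by move=> st m; rewrite !in_span_consP; split=> -[a [m' [/st spanm' ->]]]; exists a, m'.
Qed.

Lemma span_eq_set_nth y u i z w : (i < size u)%N ->
  in_span [:: y; u`_i] z -> in_span [:: y; u`_i] w ->
  in_span [:: z; w] y -> in_span [:: z; w] u`_i ->
  span_eq (y :: u) (z :: set_nth 0 u i w).
Proof.
set u' := set_nth 0 u i w => ltiu z_yu w_yu y_zw ui_zw.
have size_u' : size u' = size u by rewrite size_set_nth; apply/maxn_idPr.
have nth_u' j : u'`_j = if j == i then w else u`_j by rewrite nth_set_nth.
have span_pair s a b :
    in_span s a -> in_span s b -> forall m, in_span [:: a; b] m -> in_span s m.
  by move=> sa sb m; apply: in_span_trans => -[|[|]].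
have span_tail x t j : (j < size t)%N -> in_span (x :: t) t`_j.
  by move=> ltjt; apply/in_span_cons/in_span_nth.
have w_zu' : in_span (z :: u') w.
  by move: (span_tail z u' i); rewrite nth_u' eqxx size_u'; apply.
apply: span_eq_gen => -[|j]; rewrite /= ?ltnS ?size_u' => ltju.
- by apply: span_pair z_yu; [apply: in_span_head | apply: span_tail].
- rewrite nth_u'; case: eqP => _; last exact: span_tail.
  by apply: span_pair w_yu; [apply: in_span_head | apply: span_tail].
- exact: span_pair (in_span_head _ _) w_zu' _ y_zw.
- case: (eqVneq j i) => [->|neji]; first exact: span_pair (in_span_head _ _) w_zu' _ ui_zw.
  by move: (span_tail z u' j); rewrite nth_u' (negPf neji) size_u'; apply.
Qed.

Definition ann_mod (y : M) (u : seq M) : pred R := fun r => `[< in_span u (r *: y) >].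

Lemma left_ideal_ann_mod y u : left_ideal (ann_mod y u).
Proof.
split=> [|a b /asboolP ay /asboolP by'|r a /asboolP ay]; apply/asboolP.
- by rewrite scale0r; apply: in_span0.
- by rewrite scalerDl; apply: in_spanD.
- by rewrite -scalerA; apply: in_spanZ.
Qed.

Lemma independent_cons y u t : span_eq u t -> independent t ->
  (forall r, in_span u (r *: y) -> r *: y = 0) -> independent (y :: t).
Proof.
move=> ut indep_t torsion_y c; rewrite lincomb_cons => comb0.
have cy0 : c 0%N *: y = 0.
  apply: torsion_y; apply/ut; rewrite -[_ *: y]opprK; apply: in_spanN.
  by exists (c \o succn); apply/eqP; rewrite eq_sym -addr_eq0 addrC comb0.
move: comb0; rewrite cy0 add0r => /indep_t indep_c [|i] //= ltit.
exact: indep_c.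
Qed.

Lemma independent_uniform_cyclic t :
  (forall x y : M, x != 0 -> y != 0 ->
     exists r1 r2, r1 *: x = r2 *: y /\ r1 *: x != 0) ->
  independent t -> exists z, forall k, (k < size t)%N -> in_span [:: z] t`_k.
Proof.
move=> uniform; elim: t => [|x t IHt] indep_xt; first by exists 0.
have indep_t : independent t.
  move=> c comb0 k ltkt.
  apply: (indep_xt (fun j => if j is j'.+1 then c j' else 0) _ k.+1 ltkt).
  by rewrite lincomb_cons scale0r add0r.
have [z z_t] := IHt indep_t.
have [->|xn0] := eqVneq x 0.
  by exists z => -[|k] /= ltk; [apply: in_span0 | apply: z_t].
suff t0 : forall k, (k < size t)%N -> t`_k = 0.
  exists x => -[|k] /= ltk; first exact: in_span_head.
  by rewrite t0 //; apply: in_span0.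
move=> k ltkt; apply/eqP; apply: contraT => tkn0.
have [r1 [r2 [r12 r1x]]] := uniform _ _ xn0 tkn0.
case/negP: r1x; apply/eqP.
pose c j := if j is j'.+1 then (if j' == k then - r2 else 0) else r1.
apply: (indep_xt c _ 0%N) => //.
by rewrite lincomb_cons /= lincomb_delta // r12 scaleNr subrr.
Qed.

Definition ord_coef n (c : 'I_n -> R) : nat -> R :=
  fun k => if insub k is Some i then c i else 0.

Lemma lincomb_ord_coef s (c : 'I_(size s) -> R) :
  \sum_(i < size s) c i *: s`_i = lincomb (ord_coef c) s.
Proof. by apply: eq_bigr => i _; rewrite /ord_coef valK. Qed.

Lemma fin_generatedP : fin_generated M <-> exists s, forall m, in_span s m.
Proof.
split=> -[s spans]; exists s => m; have [c ->] := spans m.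
  by exists (ord_coef c); rewrite lincomb_ord_coef.
by exists (fun i => c i).
Qed.

Lemma direct_sum_of_cyclicsP :
  direct_sum_of_cyclics M <-> exists s, (forall m, in_span s m) /\ independent s.
Proof.
split=> -[s [spans indep]]; exists s; split=> [m|c comb0].
- by have [c ->] := spans m; exists (ord_coef c); rewrite lincomb_ord_coef.
- by move=> i ltis; apply: (indep (fun j : 'I_(size s) => c j) comb0 (Ordinal ltis)).
- by have [c ->] := spans m; exists (fun i => c i).
- move=> i; have := indep (ord_coef c) _ i (ltn_ord i).
  by rewrite /ord_coef valK -lincomb_ord_coef; apply.
Qed.

End Span.

Section Ideals.
Variable R : nzRingType.

Definition no_zero_divisors : Prop := forall a b : R, a * b = 0 -> a = 0 \/ b = 0.
(* [left_duo]: every left ideal is two-sided (aR is in Ra); [right_duo]: Ra is in aR. *)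
Definition left_duo : Prop := forall a x : R, exists y, a * x = y * a.
Definition right_duo : Prop := forall a x : R, exists y, x * a = a * y.
Definition left_principal : Prop := forall I : pred R, left_ideal I ->
  exists a, forall x, x \in I <-> exists r, x = r * a.

Definition lideal2 (a b : R) : pred R := fun x => `[< exists r s, x = r * a + s * b >].

Lemma lideal2_l a b : a \in lideal2 a b.
Proof. by apply/asboolP; exists 1, 0; rewrite mul1r mul0r addr0. Qed.

Lemma lideal2_r a b : b \in lideal2 a b.
Proof. by apply/asboolP; exists 0, 1; rewrite mul1r mul0r add0r. Qed.

Lemma left_ideal_lideal2 a b : left_ideal (lideal2 a b).
Proof.
split=> [|x y /asboolP[r1 [s1 ->]] /asboolP[r2 [s2 ->]]|k x /asboolP[r [s ->]]];
  apply/asboolP.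
- by exists 0, 0; rewrite !mul0r addr0.
- by exists (r1 + r2), (s1 + s2); rewrite !mulrDl addrACA.
- by exists (k * r), (k * s); rewrite mulrDr !mulrA.
Qed.

Definition lmultiples (a : R) : pred R := fun x => `[< exists r, x = r * a >].

Lemma left_ideal_lmultiples a : left_ideal (lmultiples a).
Proof.
split=> [|x y /asboolP[r1 ->] /asboolP[r2 ->]|k x /asboolP[r ->]]; apply/asboolP.
- by exists 0; rewrite mul0r.
- by exists (r1 + r2); rewrite mulrDl.
- by exists (k * r); rewrite mulrA.
Qed.

End Ideals.

Section PrincipalDomain.
Variable R : nzRingType.
Hypotheses (domR : no_zero_divisors R) (principalR : left_principal R).

Lemma syzygy_cyclic (v w : R) : v != 0 \/ w != 0 ->
  exists m n, m * v = n * w /\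
    forall x1 x2, x1 * v = x2 * w -> exists r, x1 = r * m /\ x2 = r * n.
Proof.
move=> vw_n0; have [w0|wn0] := eqVneq w 0.
  have vn0 : v != 0 by case: vw_n0; rewrite // w0 eqxx.
  exists 0, 1; split=> [|x1 x2]; first by rewrite w0 !mul0r mulr0.
  rewrite w0 mulr0 => /domR[->|v0]; last by rewrite v0 eqxx in vn0.
  by exists x2; rewrite mulr0 mulr1.
pose S := fun x => `[< exists x2, x * v = x2 * w >].
have idealS : left_ideal S.
  split=> [|x y /asboolP[x2 xv] /asboolP[y2 yv]|r x /asboolP[x2 xv]]; apply/asboolP.
  - by exists 0; rewrite !mul0r.
  - by exists (x2 + y2); rewrite !mulrDl xv yv.
  - by exists (r * x2); rewrite -!mulrA xv.
have [m Sm] := principalR idealS.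
have /asboolP[n mn] : m \in S by apply/Sm; exists 1; rewrite mul1r.
exists m, n; split=> // x1 x2 x12.
have /Sm[r x1E] : x1 \in S by apply/asboolP; exists x2.
exists r; split=> //.
have : (r * n - x2) * w = 0 by rewrite mulrBl -mulrA -mn mulrA -x1E x12 subrr.
by case/domR=> [/eqP|w0]; [rewrite subr_eq0 => /eqP | rewrite w0 eqxx in wn0].
Qed.

(* The matrix [[p, -q], [m, n]] has the left inverse [[v, r], [-w, s]]. *)
Lemma unimodular_completion (p q v w : R) : p * v + q * w = 1 ->
  exists m n r s, [/\ v * p + r * m = 1, r * n = v * q,
                      s * m = w * p & w * q + s * n = 1].
Proof.
move=> pvqw.
have vw_n0 : v != 0 \/ w != 0.
  have [v0|] := eqVneq v 0; last by left.
  have [w0|] := eqVneq w 0; last by right.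
  by move: pvqw; rewrite v0 w0 !mulr0 addr0 => /esym/eqP; rewrite oner_eq0.
have [m [n [mn syz]]] := syzygy_cyclic vw_n0.
have qw : q * w = 1 - p * v by rewrite -pvqw addrAC subrr add0r.
have pv : p * v = 1 - q * w by rewrite -pvqw addrK.
have [r [rm rn]] : exists r, 1 - v * p = r * m /\ v * q = r * n.
  by apply: syz; rewrite mulrBl mul1r -!mulrA qw mulrBr mulr1.
have [s [sm sn]] : exists s, w * p = s * m /\ 1 - w * q = s * n.
  by apply: syz; rewrite mulrBl mul1r -!mulrA pv mulrBr mulr1.
by exists m, n, r, s; rewrite -rm -sn -sm rn subrKC addrC subrK.
Qed.

Hypothesis duoR : right_duo R.

Lemma left_bezout (g d : R) : exists h p q v w,
  [/\ g = h * p, d = h * q, p * v + q * w = 1 & exists a, g = a * h].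
Proof.
have [h hE] := principalR (left_ideal_lideal2 g d).
have /hE[a1 gE] := lideal2_l g d.
have /hE[a2 dE] := lideal2_r g d.
have [h0|hn0] := eqVneq h 0.
  exists 0, 1, 0, 1, 0; rewrite gE dE h0 !(mulr0, mul0r) mulr1 addr0.
  by split=> //; exists 0; rewrite mulr0.
have /asboolP[r1 [r2 hE']] : h \in lideal2 g d by apply/hE; exists 1; rewrite mul1r.
have [[p hp] [q hq]] := (duoR h a1, duoR h a2).
have [[v gv] [w dw]] := (duoR g r1, duoR d r2).
exists h, p, q, v, w; split; [by rewrite gE | by rewrite dE | | by exists a1].
have : h * (p * v + q * w - 1) = 0.
  by rewrite mulrBr mulr1 mulrDr !mulrA -hp -hq -gE -dE -gv -dw -hE' subrr.
by case/domR=> [h0|/eqP]; [rewrite h0 eqxx in hn0 | rewrite subr_eq0 => /eqP].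
Qed.

End PrincipalDomain.

Section Decomposition.
Variable R : nzRingType.
Hypotheses (domR : no_zero_divisors R) (principalR : left_principal R).
Hypotheses (duoR : right_duo R) (noethR : left_noetherian R).
Variable M : lmodType R.

(* With g = h p and d_i = h q, pass to the generators z = p y - q u_i and w = m y + n u_i
   of the same module: h z lies in the span of u with u_i replaced by w, so h enters the
   maximal ideal Rg, whence d_i = h q lies in gR. *)
Lemma maximal_coef_divisible (y : M) u g d :
  (forall z u', size u' = size u -> span_eq (y :: u) (z :: u') ->
     {subset ann_mod y u <= ann_mod z u'} -> {subset ann_mod z u' <= ann_mod y u}) ->
  (forall r, r \in ann_mod y u <-> exists a, r = a * g) ->
  g *: y = lincomb d u ->
  forall i, (i < size u)%N -> exists f, d i = g * f.
Proof.
move=> ymax annE gy i ltiu.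
have [h [p [q [v [w [gE dE pvqw [a gEl]]]]]]] :=
  left_bezout domR principalR duoR g (d i).
have [m [n [r [s [e1 e2 e3 e4]]]]] := unimodular_completion domR principalR pvqw.
pose z := p *: y + (- q) *: u`_i.
pose w' := m *: y + n *: u`_i.
pose u' := set_nth 0 u i w'.
have size_u' : size u' = size u by rewrite size_set_nth; apply/maxn_idPr.
have yu_zu' : span_eq (y :: u) (z :: u').
  apply: span_eq_set_nth => //; try exact: in_span2.
  - have -> : y = v *: z + r *: w'.
      rewrite !scalerDr !scalerA addrACA -!scalerDl e1 mulrN e2 addNr.
      by rewrite scale1r scale0r addr0.
    exact: in_span2.
  - have -> : u`_i = (- w) *: z + s *: w'.
      rewrite !scalerDr !scalerA addrACA -!scalerDl mulNr e3 addNr mulrNN e4.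
      by rewrite scale1r scale0r add0r.
    exact: in_span2.
have hz_ann : h \in ann_mod z u'.
  apply/asboolP.
  have -> : h *: z = lincomb d u' - d i *: w'.
    by rewrite lincomb_set_nth // -gy addrK scalerDr !scalerA -gE mulrN -dE scaleNr.
  apply: in_spanB; first by exists d.
  apply: in_spanZ; move: (in_span_nth (u := u') (k := i)).
  by rewrite nth_set_nth /= eqxx size_u'; apply.
have /annE[b hb] : h \in ann_mod y u.
  apply: (ymax z u' size_u' yu_zu') => // x /annE[c ->].
  by rewrite gEl mulrA; case: (left_ideal_ann_mod z u') => _ _; apply.
have [f bg] := duoR g b.
by exists (f * q); rewrite dE hb bg mulrA.
Qed.

Lemma decomposition (s : seq M) : exists2 t, span_eq s t & independent t.
Proof.
move: {2}(size s) (erefl (size s)) => n.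
elim: n s => [|n IHn] [|x s] // => [_|[sz_s]]; first by exists [::].
pose ok (p : M * seq M) := size p.2 = n /\ span_eq (x :: s) (p.1 :: p.2).
have [[y u] [/= sz_u xs_yu] ymax] :=
  left_noetherian_maximal (P := ok) noethR (fun p _ => left_ideal_ann_mod p.1 p.2)
    (conj sz_s (fun=> iff_refl _) : ok (x, s)).
have [g annE] := principalR (left_ideal_ann_mod y u).
have /asboolP[d gy] : g \in ann_mod y u by apply/annE; exists 1; rewrite mul1r.
have [f df] : {f : nat -> R & forall i, (i < size u)%N -> d i = g * f i}.
  apply: (choice (P := fun i fi => (i < size u)%N -> d i = g * fi)) => i.
  have [ltiu|geiu] := ltnP i (size u); last by exists 0.
  have [|fi dfi] := maximal_coef_divisible _ annE gy ltiu; last by exists fi.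
  move=> z u' sz_u' yu_zu'; apply: (ymax (z, u')).
  by split=> [|m] /=; [rewrite sz_u' | rewrite xs_yu].
pose y' := y - lincomb f u.
have gy' : g *: y' = 0.
  by rewrite /y' scalerBr gy scaler_lincomb (eq_lincomb df) subrr.
have yu_y'u : span_eq (y :: u) (y' :: u).
  have fu_yu z : in_span (z :: u) (lincomb f u) by apply/in_span_cons; exists f.
  apply: span_eq_gen => -[|i] /= lti; try by apply/in_span_cons/in_span_nth.
    by apply: in_spanB => //; apply: in_span_head.
  by rewrite -[y](subrK (lincomb f u)); apply: in_spanD => //; apply: in_span_head.
have [t u_t indep_t] := IHn u sz_u.
exists (y' :: t); first by move=> m; rewrite xs_yu yu_y'u; apply: span_eq_cons.
apply: independent_cons u_t indep_t _ => c cy'.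
have /annE[b ->] : c \in ann_mod y u.
  apply/asboolP; rewrite -[y](subrK (lincomb f u)) scalerDr.
  by apply: in_spanD => //; apply: in_spanZ; exists f.
by rewrite -scalerA gy' scaler0.
Qed.

End Decomposition.

Lemma left_FGC_of_principal (R : nzRingType) :
  no_zero_divisors R -> right_duo R -> left_principal R -> left_noetherian R ->
  left_FGC R.
Proof.
move=> domR duoR principalR noethR M /fin_generatedP[s spans].
have [t st indep_t] := decomposition domR principalR duoR noethR s.
by apply/direct_sum_of_cyclicsP; exists t; split=> // m; apply/st.
Qed.

Section TwoGeneratedIdeal.
Variables (R : nzRingType) (a b : R).

Definition lideal2_pred : {pred R^o} := lideal2 a b.

Fact lideal2_submod_closed : submod_closed lideal2_pred.
Proof.
have [ideal0 idealD idealM] := left_ideal_lideal2 a b.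
by split=> // k x y Ix Iy; apply: idealD => //; apply: idealM.
Qed.
HB.instance Definition _ :=
  GRing.isSubmodClosed.Build R R^o lideal2_pred lideal2_submod_closed.

Record lideal2_mod := Lideal2 { lideal2_val : R^o; _ : lideal2_val \in lideal2_pred }.
HB.instance Definition _ := [isSub for lideal2_val].
HB.instance Definition _ := [Choice of lideal2_mod by <:].
HB.instance Definition _ := [SubChoice_isSubLmodule of lideal2_mod by <:].

End TwoGeneratedIdeal.

Lemma lideal2_principal (R : nzRingType) :
  no_zero_divisors R -> left_duo R -> left_FGC R ->
  forall a b : R, exists c, forall x, x \in lideal2 a b <-> exists r, x = r * c.
Proof.
move=> domR duoR fgcR a b.
have [_ _ idealM] := left_ideal_lideal2 a b.
have fg : fin_generated (lideal2_mod a b).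
  apply/fin_generatedP; exists [:: Lideal2 (lideal2_l a b); Lideal2 (lideal2_r a b)].
  case=> x Ix; have /asboolP[r [s xE]] := Ix.
  have -> : Lideal2 Ix = r *: Lideal2 (lideal2_l a b) + s *: Lideal2 (lideal2_r a b).
    by apply: val_inj.
  exact: in_span2.
have /direct_sum_of_cyclicsP[t [spans indep_t]] := fgcR _ fg.
(* For nonzero x, y the common multiple r x = x y is nonzero, R being a left duo domain. *)
have uniform (x y : lideal2_mod a b) : x != 0 -> y != 0 ->
    exists r1 r2, r1 *: x = r2 *: y /\ r1 *: x != 0.
  move=> xn0 yn0; have [r xyE] := duoR (val x) (val y).
  exists r, (val x); split; first exact/val_inj/esym.
  apply: contra xn0 => /eqP/(congr1 val) /= rx0.
  case: (domR (val x) (val y)); first by rewrite xyE.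
    by move=> x0; apply/eqP/val_inj.
  by move=> y0; rewrite -(inj_eq val_inj) y0 eqxx in yn0.
have [z zt] := independent_uniform_cyclic uniform indep_t.
exists (val z) => x; split=> [Ix|[r ->]]; last exact/idealM/valP.
have [c] := in_span_trans zt (spans (Lideal2 Ix)).
rewrite lincomb_cons lincomb_nil addr0 => /(congr1 val) /= ->.
by exists (c 0%N).
Qed.

Lemma principal_of_lideal2 (R : nzRingType) : left_noetherian R ->
  (forall a b : R, exists c, forall x, x \in lideal2 a b <-> exists r, x = r * c) ->
  left_principal R.
Proof.
move=> noethR lideal2E I idealI; have [I0 ID IM] := idealI.
have [a Ia amax] := left_noetherian_maximal (P := fun a => a \in I) noethR
  (fun a _ => left_ideal_lmultiples a) I0.
exists a => x; split=> [Ix|[r ->]]; last exact: IM.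
have [c cE] := lideal2E a x.
have Ic : c \in I.
  have /asboolP[r [s ->]] : c \in lideal2 a x by apply/cE; exists 1; rewrite mul1r.
  by apply: ID; apply: IM.
have ac : {subset lmultiples a <= lmultiples c}.
  move=> y /asboolP[r ->]; have /cE[r' ->] := lideal2_l a x.
  by apply/asboolP; exists (r * r'); rewrite mulrA.
have /cE xc : x \in lideal2 a x := lideal2_r a x.
by have /asboolP := amax c Ic ac x (introT (asboolP _) xc).
Qed.

Lemma principal_of_left_FGC (R : nzRingType) :
  no_zero_divisors R -> left_duo R -> left_FGC R -> left_noetherian R ->
  left_principal R.
Proof.
move=> domR duoR fgcR noethR.
exact: principal_of_lideal2 noethR (lideal2_principal domR duoR fgcR).
Qed.

Section DuoRing.
Variable R : nzRingType.
Hypothesis duoR : duo_ring R.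

Lemma duo_ring_left_duo : left_duo R.
Proof.
move=> a x; have [_ _ idealM] := duoR.1 _ (left_ideal_lmultiples a).
by apply/asboolP/idealM/asboolP; exists 1; rewrite mul1r.
Qed.

Lemma duo_ring_right_duo : right_duo R.
Proof.
move=> a x; have [_ _ idealM] := duoR.2 _ (left_ideal_lmultiples (a : R^c)).
by apply/asboolP/idealM/asboolP; exists 1; rewrite mul1r.
Qed.

Lemma duo_ring_conv : duo_ring R^c.
Proof. by split; [exact: duoR.2 | exact: duoR.1]. Qed.

Lemma left_principal_conv : left_principal R -> left_principal R^c.
Proof.
move=> principalR I idealI; have [g gE] := principalR I (duoR.2 I idealI).
exists g => x; rewrite gE; split=> -[r ->].
  by have [y ry] := duo_ring_right_duo g r; exists y.
by have [y ry] := duo_ring_left_duo g r; exists y.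
Qed.

Lemma principal_ideal_ringE : principal_ideal_ring R <-> left_principal R.
Proof. by split=> [[]|principalR] //; split=> //; apply: left_principal_conv. Qed.

Hypothesis primeR : prime_ring R.

Lemma prime_duo_no_zero_divisors : no_zero_divisors R.
Proof.
move=> a b ab0; apply: primeR => r.
by have [y ry] := duo_ring_right_duo b r; rewrite -mulrA ry mulrA ab0 mul0r.
Qed.

Lemma prime_ring_conv : prime_ring R^c.
Proof.
move=> a b abc; have [|b0|a0] := primeR (a := b) (b := a); last by left.
- by move=> r; rewrite -mulrA; apply: abc.
- by right.
Qed.

Lemma left_FGC_principal :
  left_noetherian R -> left_FGC R <-> left_principal R.
Proof.
move=> noethR; have domR := prime_duo_no_zero_divisors.
split=> [fgcR|principalR].
  exact: principal_of_left_FGC domR duo_ring_left_duo fgcR noethR.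
exact: left_FGC_of_principal domR duo_ring_right_duo principalR noethR.
Qed.

End DuoRing.

Theorem proposition3p5 (R : nzRingType) :
  noetherian R -> prime_ring R -> duo_ring R ->
  (FGC R <-> left_FGC R) /\ (left_FGC R <-> principal_ideal_ring R) /\
  (principal_ideal_ring R <-> right_FGC R).
Proof.
move=> [noethL noethR] primeR duoR.
have left_FGCE := left_FGC_principal duoR primeR noethL.
have right_FGCE : right_FGC R <-> left_principal R^c :=
  left_FGC_principal (duo_ring_conv duoR) (prime_ring_conv primeR) noethR.
have convE : left_principal R <-> left_principal R^c.
  split; first exact: left_principal_conv.
  exact: left_principal_conv (duo_ring_conv duoR).
rewrite /FGC (principal_ideal_ringE duoR) right_FGCE -convE left_FGCE.
tauto.
Qed.
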